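(* For every integer $n \geq 1$, the discrete interval hypergraph $H_n$ satisfies $\mathrm{ch}_{cf}(H_n) \leq \lfloor \log_2 n \rfloor + 1$. That is, for every family $\{L_i\}_{i\in[n]}$ of sets of positive integers with $|L_i| \geq \lfloor \log_2 n\rfloor + 1$ for all $i$, there is a conflict-free coloring $C$ of $H_n$ with $C(i)\in L_i$ for all $i$.
   Context: For $n\ge 1$ let $[n]=\{1,\dots,n\}$ and for $s\le t$ in $[n]$ let $[s,t]=\{i : s\le i\le t\}$. The discrete interval hypergraph $H_n$ has vertex set $[n]$ and hyperedge set $\{[s,t] : s\le t,\ s,t\in[n]\}$. A coloring $C\colon V\to\mathbb{Z}_{>0}$ of a hypergraph $H=(V,\mathcal E)$ is conflict-free if every hyperedge $S\in\mathcal E$ contains a vertex whose color appears exactly once in $S$ (i.e., there is $i$ with $|S\cap C^{-1}(i)|=1$). Given a family $\mathcal L=\{L_v\}_{v\in V}$ of sets of positive integers, $H$ admits a coloring from $\mathcal L$ if the coloring satisfies $C(v)\in L_v$ for all $v$. $H$ is $k$-cf-choosable if for every family $\mathcal L$ with $|L_v|\ge k$ for all $v$, $H$ admits a conflict-free coloring from $\mathcal L$; the cf-choice number $\mathrm{ch}_{cf}(H)$ is the minimum such $k$. *)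

From mathcomp Require Import all_boot.
Set Implicit Arguments. Unset Strict Implicit. Unset Printing Implicit Defensive.

Definition interval (s t : nat) : seq nat := iota s (t.+1 - s).

(* A hyperedge S (given as a duplicate-free list) is conflict-free under the
   coloring C if some color appears exactly once in S. *)
Definition cf_edge (C : nat -> nat) (S : seq nat) : Prop :=
  exists i : nat, count (fun v => C v == i) S = 1.

Definition cf_coloring_Hn (n : nat) (C : nat -> nat) : Prop :=
  forall s t : nat, 1 <= s -> s <= t -> t <= n -> cf_edge C (interval s t).

Definition has_at_least (k : nat) (L : nat -> Prop) : Prop :=
  exists s : seq nat, uniq s /\ size s = k /\ (forall x, x \in s -> L x).

From mathcomp Require Import all_boot zify.

Set Implicit Arguments.
Unset Strict Implicit.
Unset Printing Implicit Defensive.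

(* Give the middle vertex p of a block some color c from its list, remove c from
   every other list and recurse on the two halves: an interval through p sees c
   exactly once, and any other interval lies inside one half.  Each level of the
   recursion halves the block and uses up one color per list, so lists of size k
   suffice for blocks of fewer than 2^k vertices, and n < 2^(floor(log2 n) + 1). *)

Lemma has_at_least_setD1 k (P : nat -> Prop) c :
  has_at_least k.+1 P -> has_at_least k (fun x => P x /\ x != c).
Proof.
case=> s [us [ss hs]].
have size_rem_s : k <= size (rem c s).
  by case: (boolP (c \in s)) => hc; [rewrite size_rem // ss | rewrite rem_id // ss].
exists (take k (rem c s)); split; first exact/take_uniq/rem_uniq.
split; first by rewrite size_takel.
move=> x /mem_take; rewrite (mem_rem_uniq _ us) => /andP[xc xs].
by split; [exact: hs|].
Qed.

Lemma mem_interval v s t : (v \in interval s t) = (s <= v <= t).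
Proof. rewrite mem_iota; lia. Qed.

Lemma cf_edge_eq_in C C' s t :
  {in interval s t, C =1 C'} -> cf_edge C (interval s t) -> cf_edge C' (interval s t).
Proof. by move=> eqC [i hi]; exists i; rewrite -hi; apply: eq_in_count => v /eqC ->. Qed.

Lemma cf_edge_unique_color C s t p : s <= p <= t ->
  {in interval s t, forall v, v != p -> C v != C p} -> cf_edge C (interval s t).
Proof.
move=> hp uniqC; exists (C p).
rewrite (@eq_in_count _ _ (pred1 p)); last first.
  move=> v vst /=; case: (eqVneq v p) => [->|vp]; first by rewrite eqxx.
  exact/negbTE/uniqC.
by rewrite count_uniq_mem ?iota_uniq // mem_interval hp.
Qed.

Definition cf_colorable (L : nat -> nat -> Prop) (a b : nat) : Prop :=
  exists C : nat -> nat, (forall i, a <= i < b -> L i (C i)) /\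
    (forall s t, a <= s -> s <= t -> t < b -> cf_edge C (interval s t)).

Lemma cf_colorable_empty L a b : b <= a -> cf_colorable L a b.
Proof. by move=> ba; exists id; split=> [i|s t]; lia. Qed.

Lemma cf_colorable_split L a p b c : a <= p < b -> L p c ->
  cf_colorable (fun i x => L i x /\ x != c) a p ->
  cf_colorable (fun i x => L i x /\ x != c) p.+1 b ->
  cf_colorable L a b.
Proof.
move=> hp Lpc [C1 [LC1 cfC1]] [C2 [LC2 cfC2]].
pose C i := if i < p then C1 i else if i == p then c else C2 i.
have C_left i : i < p -> C i = C1 i by rewrite /C => ->.
have C_right i : p < i -> C i = C2 i.
  by move=> pi; rewrite /C ltnNge ltnW //= gtn_eqF.
have C_p : C p = c by rewrite /C ltnn eqxx.
have C_side i : a <= i < b -> i != p -> L i (C i) /\ C i != c.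
  move=> hi; rewrite neq_ltn => /orP[ip|pi].
    by rewrite C_left //; apply: LC1; lia.
  by rewrite C_right //; apply: LC2; lia.
exists C; split=> [i hi | s t hs st tb].
  by case: (eqVneq i p) => [->|ip]; [rewrite C_p | case: (C_side i)].
have [tp|pt] := ltnP t p.
  apply: (@cf_edge_eq_in C1); last exact: cfC1.
  by move=> v; rewrite mem_interval => hv; rewrite C_left //; lia.
have [ps|sp] := ltnP p s.
  apply: (@cf_edge_eq_in C2); last exact: cfC2.
  by move=> v; rewrite mem_interval => hv; rewrite C_right //; lia.
apply: (@cf_edge_unique_color _ _ _ p); first lia.
move=> v; rewrite mem_interval C_p => hv vp.
by case: (C_side v) => //; lia.
Qed.

Lemma cf_colorable_has_at_least k L a b : b - a < 2 ^ k ->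
  (forall i, a <= i < b -> has_at_least k (L i)) -> cf_colorable L a b.
Proof.
elim: k L a b => [|k IH] L a b hab hL.
  by apply: cf_colorable_empty; rewrite expn0 in hab; lia.
have [ba|ab] := leqP b a; first exact: cf_colorable_empty.
rewrite expnS in hab.
pose p := a + (b - a)./2.
have p_mid : a <= p < b by rewrite /p; lia.
have [[|c s] [_ [size_s Ls]]] := hL p p_mid; first by [].
have Lpc : L p c by apply: Ls; rewrite mem_head.
have hL' i : a <= i < b -> has_at_least k (fun x => L i x /\ x != c).
  by move=> hi; apply/has_at_least_setD1/hL.
apply: (cf_colorable_split p_mid Lpc).
  apply: IH => [|i hi]; first by rewrite /p; lia.
  by apply: hL'; rewrite /p in hi; lia.
apply: IH => [|i hi]; first by rewrite /p; lia.
by apply: hL'; rewrite /p in hi; lia.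
Qed.

Theorem proposition2p1 (n : nat) (hn : 1 <= n) (L : nat -> nat -> Prop) :
  (forall i x, 1 <= i <= n -> L i x -> 0 < x) ->
  (forall i, 1 <= i <= n -> has_at_least (trunc_log 2 n).+1 (L i)) ->
  exists C : nat -> nat,
    (forall i, 1 <= i <= n -> L i (C i)) /\ cf_coloring_Hn n C.
Proof.
move=> _ hL.
have n_lt_pow : n.+1 - 1 < 2 ^ (trunc_log 2 n).+1 by rewrite subn1; exact: trunc_log_ltn.
have [C [LC cfC]] := cf_colorable_has_at_least n_lt_pow hL.
by exists C; split=> [i hi | s t s1 st tn]; [apply: LC | apply: cfC]; lia.
Qed.
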